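(* For every $n\geq1$, the number of $n$-multisets of $[n]$ in which no integer other than $n$ occurs exactly once equals the coefficient of $z^n$ in $\frac{1-3z-\sqrt{1-2z-3z^2}}{6z-2}$, i.e. the $n$-th term of OEIS sequence A005773 ($1,1,2,5,13,35,96,\dots$ indexed from $n=0$).
   Context: An $n$-multiset of $[n]=\{1,\dots,n\}$ is a collection of $n$ elements of $[n]$ in which elements may be repeated; the multiplicity of an integer is the number of times it occurs. The condition is that every $j\in\{1,\dots,n-1\}$ has multiplicity different from $1$ (the multiplicity of $n$ is unrestricted). *)

From mathcomp Require Import all_boot all_order all_algebra.
Set Implicit Arguments. Unset Strict Implicit. Unset Printing Implicit Defensive.
Import Order.TTheory GRing.Theory Num.Theory.

(* An n-multiset of [n] = {1,...,n} is encoded by its multiplicity function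
   m : 'I_n -> nat (ordinal i stands for the integer i+1), with total size n.
   Multiplicities are at most n, so m is a finite function into 'I_n.+1. *)
Definition multiset_size n (m : {ffun 'I_n -> 'I_n.+1}) : nat :=
  \sum_(i < n) (m i : nat).

Definition no_single_below_n n (m : {ffun 'I_n -> 'I_n.+1}) : bool :=
  [forall i : 'I_n, (i.+1 != n) ==> ((m i : nat) != 1)].

Definition count_multisets (n : nat) : nat :=
  #|[set m : {ffun 'I_n -> 'I_n.+1} | (multiset_size m == n) && no_single_below_n m]|.

Local Open Scope ring_scope.

Definition series := nat -> rat.

Definition conv (a b : series) : series :=
  fun n => \sum_(i < n.+1) a i * b (n - i)%N.

Definition poly_disc : series :=
  fun n => if n == 0%N then 1 else if n == 1%N then -2 else if n == 2%N then -3 else 0.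
Definition poly_num : series :=
  fun n => if n == 0%N then 1 else if n == 1%N then -3 else 0.
Definition poly_den : series :=
  fun n => if n == 0%N then -2 else if n == 1%N then 6 else 0.

Definition is_sqrt_disc (d : series) : Prop :=
  d 0%N = 1 /\ forall n, conv d d n = poly_disc n.

(* y = (1 - 3z - d)/(6z - 2), i.e. (6z - 2) * y = 1 - 3z - d as formal power
   series (6z - 2 is invertible since its constant term is nonzero). *)
Definition is_gf (d y : series) : Prop :=
  forall n, conv poly_den y n = poly_num n - d n.

From mathcomp Require Import all_boot all_order all_algebra.
From mathcomp Require Import ring lra.
Set Implicit Arguments. Unset Strict Implicit. Unset Printing Implicit Defensive.
Import Order.TTheory GRing.Theory Num.Theory.
Local Open Scope ring_scope.

(* Encoding a multiset by its multiplicity function, the count is the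
   coefficient of z^n in the product of the generating polynomials of the
   allowed multiplicities, i.e. in (G - z)^(n-1) G with G = 1 + z + ... + z^n.
   Expanding binomially and comparing, term by term, the truncated geometric
   power G^p with (1 + z)^(2p-1) (both have C(2p-1, p) as coefficient of z^p),
   this is the coefficient a_n of z^n in (1 + z)(1 + z + z^2)^(n-1).  The
   differential equation satisfied by (1 + z + z^2)^L gives the recurrence
   n a_n = 2n a_(n-1) + 3(n-2) a_(n-2).  On the other side D = 1 + 2y satisfies
   (1 - 3z) D^2 = 1 + z, whose derivative yields (1 + z)(1 - 3z) D' = 2D, hence
   the same recurrence for y; the initial values agree.  Power series are
   handled through their truncations, so identities become congruences
   modulo z^N. *)

Lemma card_ffun_sum_coef (R : comNzRingType) (I : finType) m (P : I -> 'I_m -> bool) n :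
  #|[set f : {ffun I -> 'I_m} | (\sum_i (f i : nat) == n) && [forall i, P i (f i)]]|%:R
  = (\prod_i \sum_(j | P i j) 'X^j : {poly R})`_n.
Proof.
under eq_bigr do rewrite big_mkcond /=.
rewrite bigA_distr_bigA coef_sum -sum1_card natr_sum.
rewrite [RHS](bigID (fun f : {ffun I -> 'I_m} => [forall i, P i (f i)])) /=.
rewrite [X in _ + X]big1 ?addr0 => [|f /forallPn[i Pi]]; last first.
  by rewrite (bigD1 i) //= (negbTE Pi) mul0r coef0.
rewrite [LHS]big_mkcond [RHS]big_mkcond; apply: eq_bigr => f _; rewrite inE.
case: (boolP [forall i, _]) => [allP|_]; last by rewrite andbF.
rewrite andbT (eq_bigr (fun i => 'X^(f i))) => [|i _]; last by rewrite (forallP allP).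
by rewrite prodrXr coefXn eq_sym; case: eqP.
Qed.

Lemma count_multisets_coef (R : comNzRingType) n : (count_multisets n)%:R =
  (\prod_(i < n) \sum_(j < n.+1 | (i.+1 != n) ==> (j != 1%N :> nat)) 'X^j : {poly R})`_n.
Proof. exact: card_ffun_sum_coef. Qed.

Definition geom_poly {R : nzRingType} m : {poly R} := \sum_(j < m) 'X^j.

Definition trinomial {R : nzRingType} : {poly R} := 1 + 'X + 'X^2.

Lemma hockey_stick p i : \sum_(l < i.+1) 'C(l + p, l) = 'C(i + p.+1, i).
Proof.
elim: i => [|i IH]; first by rewrite big_ord1 !bin0.
have -> : (i.+1 + p.+1 = (i + p.+1).+1)%N by rewrite addSn.
by rewrite big_ord_recr /= IH addSnnS [RHS]binS [RHS]addnC.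
Qed.

Lemma coef_1DX_exp (R : nzRingType) m i : ((1 + 'X) ^+ m : {poly R})`_i = 'C(m, i)%:R.
Proof.
elim: m i => [|m IH] [|i]; rewrite ?expr0 ?coef1 ?bin0n // exprS mulrDl mul1r coefD coefXM.
  by rewrite IH !bin0 addr0.
by rewrite !IH binS natrD.
Qed.

Lemma coef_geom_poly (R : nzRingType) m i : (geom_poly m : {poly R})`_i = (i < m)%:R.
Proof.
elim: m => [|m IH]; first by rewrite /geom_poly big_ord0 coef0.
rewrite /geom_poly big_ord_recr coefD -/(geom_poly m) IH coefXn /= ltnS.
by case: ltngtP; rewrite ?addr0 ?add0r.
Qed.

Lemma coef_geom_poly_exp (R : nzRingType) m p i : (i < m)%N ->
  (geom_poly m ^+ p.+1 : {poly R})`_i = 'C(i + p, i)%:R.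
Proof.
elim: p i => [|p IH] i im; first by rewrite expr1 coef_geom_poly im addn0 binn.
rewrite exprSr coefM -hockey_stick natr_sum; apply: eq_bigr => l _.
rewrite IH ?coef_geom_poly ?(leq_ltn_trans (leq_subr _ _) im) ?mulr1 //.
by rewrite (leq_ltn_trans _ im) // -ltnS.
Qed.

Lemma sum_Xn_neq1 (R : nzRingType) m : (1 < m)%N ->
  \sum_(j < m | j != 1%N :> nat) 'X^j = geom_poly m - 'X :> {poly R}.
Proof.
move=> m_gt1; rewrite /geom_poly [in RHS](bigD1 (Ordinal m_gt1)) //= expr1 addrC addrK.
exact: eq_bigl.
Qed.

Lemma prod_allowed_multiplicities (R : comNzRingType) k :
  \prod_(i < k.+1) \sum_(j < k.+2 | (i.+1 != k.+1) ==> (j != 1%N :> nat)) 'X^j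
  = (geom_poly k.+2 - 'X) ^+ k * geom_poly k.+2 :> {poly R}.
Proof.
rewrite big_ord_recr /= eqxx; congr (_ * _).
rewrite (eq_bigr (fun _ => geom_poly k.+2 - 'X)) => [|i _].
  by rewrite prodr_const card_ord.
by rewrite /= eqSS ltn_eqF // sum_Xn_neq1.
Qed.

Lemma coef_prod_allowed_multiplicities (R : comNzRingType) k :
  ((geom_poly k.+2 - 'X) ^+ k * geom_poly k.+2)`_k.+1
  = ((1 + 'X) * trinomial ^+ k)`_k.+1 :> R.
Proof.
have -> : trinomial = (1 + 'X) ^+ 2 - 'X :> {poly R} by rewrite /trinomial; ring.
rewrite !exprBn mulr_suml mulr_sumr !coef_sum; apply: eq_bigr => [[j /= jk]] _.
have -> : (-1) ^+ j * geom_poly k.+2 ^+ (k - j) * 'X ^+ j *+ 'C(k, j) * geom_poly k.+2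
    = ((-1) ^+ j *+ 'C(k, j))%:P * ('X^j * geom_poly k.+2 ^+ (k - j).+1) :> {poly R}.
  by rewrite polyCMn rmorphXn /= polyCN polyC1 exprS; ring.
have -> : (1 + 'X) * ((-1) ^+ j * ((1 + 'X) ^+ 2) ^+ (k - j) * 'X ^+ j *+ 'C(k, j))
    = ((-1) ^+ j *+ 'C(k, j))%:P * ('X^j * (1 + 'X) ^+ (2 * (k - j)).+1) :> {poly R}.
  by rewrite polyCMn rmorphXn /= polyCN polyC1 -exprM exprS; ring.
rewrite !coefCM !coefXnM ltnNge (ltnW jk) /= coef_geom_poly_exp ?ltnS ?leq_subr //.
by rewrite coef_1DX_exp (@subSn j k jk) addSn mul2n -addnn.
Qed.

Definition a005773 (n : nat) : rat := ((1 + 'X) * trinomial ^+ n.-1)`_n.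

Definition a005773_recurrence (u : nat -> rat) :=
  forall n, n.+3%:R * u n.+3 = 2 * n.+3%:R * u n.+2 + 3 * n.+1%:R * u n.+1.

Lemma a005773_recurrence_uniq u v :
  a005773_recurrence u -> a005773_recurrence v -> u 1%N = v 1%N -> u 2%N = v 2%N ->
  forall n, u n.+1 = v n.+1.
Proof.
move=> urec vrec u1 u2 n; suff : u n.+1 = v n.+1 /\ u n.+2 = v n.+2 by case.
elim: n => [|n [un1 un2]]; split => //.
by apply: (mulfI (_ : n.+3%:R != 0)); rewrite ?pnatr_eq0 // urec vrec un1 un2.
Qed.

Lemma coef_trinomialM (R : nzRingType) (p : {poly R}) m :
  (trinomial * p)`_m.+2 = p`_m.+2 + p`_m.+1 + p`_m.
Proof. by rewrite /trinomial !mulrDl mul1r !coefD coefXM coefXnM /= subn2. Qed.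

Lemma coef_1DX_M (R : nzRingType) (p : {poly R}) m :
  ((1 + 'X) * p)`_m.+1 = p`_m.+1 + p`_m.
Proof. by rewrite mulrDl mul1r coefD coefXM. Qed.

Lemma deriv_trinomial (R : nzRingType) : trinomial^`() = 1 + 'X *+ 2 :> {poly R}.
Proof. by rewrite /trinomial !derivE expr1 add0r. Qed.

Lemma shifted_trinomial_exp_ode (R : comNzRingType) L :
  'X * trinomial * ('X^2 * trinomial ^+ L)^`() =
  (trinomial * ('X^2 * trinomial ^+ L)) *+ 2 + 'X * trinomial^`() * ('X^2 * trinomial ^+ L) *+ L
  :> {poly R}.
Proof.
rewrite derivM derivXn deriv_exp /=; case: L => [|L].
  by rewrite expr0 !mulr0n !mulr0 !addr0 mulr1; ring.
by rewrite -pred_Sn !exprS; ring.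
Qed.

Lemma coef_trinomial_ode (R : comNzRingType) (W : {poly R}) L t :
  'X * trinomial * W^`() = (trinomial * W) *+ 2 + 'X * trinomial^`() * W *+ L ->
  W`_t.+2 * t.+2%:R + W`_t.+1 * t.+1%:R + W`_t * t%:R =
  (W`_t.+2 + W`_t.+1 + W`_t) * 2 + (W`_t.+1 + W`_t * 2) * L%:R.
Proof.
rewrite !mulr_natr; move/(congr1 (fun p : {poly R} => p`_t.+2)).
rewrite -mulrA mulrCA coef_trinomialM !coefXM !coef_deriv coefD !coefMn coef_trinomialM.
rewrite deriv_trinomial mulrDr mulr1 mulrDl coefD coefXM mulrnAr mulrnAl coefMn -expr2 coefXnM /=.
by case: t => [|t]; rewrite ?mulr0n.
Qed.

Lemma a005773_rec : a005773_recurrence a005773.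
Proof.
move=> L; have ode := shifted_trinomial_exp_ode rat L.
(* the factor X^2 keeps every index occurring below a natural number *)
set W : {poly rat} := 'X^2 * trinomial ^+ L in ode *.
have shift i k : (trinomial ^+ k : {poly rat})`_i = ('X^2 * trinomial ^+ k)`_i.+2.
  by rewrite coefXnM /= subn2.
have W1 i : (trinomial ^+ L.+1)`_i = (trinomial * W)`_i.+2.
  by rewrite shift /W (exprS trinomial) mulrCA.
have W2 i : (trinomial ^+ L.+2)`_i = (trinomial * (trinomial * W))`_i.+2.
  by rewrite shift /W !(exprS trinomial) !(mulrCA 'X^2).
rewrite /a005773 /= !coef_1DX_M !W2 !W1 !(shift _ L) -/W !coef_trinomialM.
move: (coef_trinomial_ode L ode) (coef_trinomial_ode L.+1 ode)
      (coef_trinomial_ode L.+2 ode) (coef_trinomial_ode L.+3 ode).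
rewrite -!natr1 => R0 R1 R2 R3; have L_ge0 : 0 <= L%:R :> rat by rewrite ler0n.
(* W is symmetric about degree L + 2; the relations force it at the indices needed *)
have w31 : W`_L.+3 = W`_L.+1.
  have : (L%:R + 1) * (W`_L.+3 - W`_L.+1) = 0 by lra.
  by move/eqP; rewrite mulf_eq0 subr_eq0 => /orP[/eqP|/eqP //]; lra.
have w40 : W`_L.+4 = W`_L.
  have : (L%:R + 2) * (W`_L.+4 - W`_L) = 0 by lra.
  by move/eqP; rewrite mulf_eq0 subr_eq0 => /orP[/eqP|/eqP //]; lra.
rewrite w31 w40 in R0 R1 R2 R3 *; lra.
Qed.

Lemma dvdp_XnP (R : idomainType) N (p : {poly R}) :
  reflect (forall i, (i < N)%N -> p`_i = 0) ('X^N %| p).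
Proof.
rewrite /dvdp -Pdiv.IdomainMonic.take_poly_modp; apply: (iffP eqP) => [tp0 i iN | p0].
  by have := congr1 (fun q : {poly R} => q`_i) tp0; rewrite coef_take_poly iN coef0.
by apply/polyP => i; rewrite coef_take_poly coef0; case: ifP => // /p0.
Qed.

Lemma dvdp_Xn_deriv (R : idomainType) N (p : {poly R}) : 'X^(N.+1) %| p -> 'X^N %| p^`().
Proof. by move=> /dvdp_XnP p0; apply/dvdp_XnP => i iN; rewrite coef_deriv p0 ?mul0rn. Qed.

Lemma dvdp_XnMl (R : idomainType) N (p q : {poly R}) :
  p`_0 != 0 -> ('X^N %| p * q) = ('X^N %| q).
Proof.
move=> p0; rewrite Gauss_dvdpr // coprimep_expl // coprimep_sym coprimepX.
by rewrite rootE horner_coef0.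
Qed.

Lemma dvdp_sub_trans (R : idomainType) (d a b c : {poly R}) :
  d %| a - b -> d %| b - c -> d %| a - c.
Proof. by move=> dab dbc; rewrite -[a](subrK b) -addrA dvdp_add. Qed.

Definition trunc N (s : series) : {poly rat} := \poly_(i < N) s i.

Lemma dvdp_Xn_trunc_mul N a b : 'X^N %| trunc N a * trunc N b - trunc N (conv a b).
Proof.
apply/dvdp_XnP => i iN; rewrite coefB coef_poly iN coefM; apply/eqP; rewrite subr_eq0.
apply/eqP/eq_bigr => [[j /= ji]] _.
by rewrite !coef_poly (leq_ltn_trans (leq_subr j i) iN) (leq_ltn_trans _ iN).
Qed.

Lemma dvdp_Xn_trunc N (p : {poly rat}) s : (forall i, p`_i = s i) -> 'X^N %| p - trunc N s.
Proof. by move=> ps; apply/dvdp_XnP => i iN; rewrite coefB coef_poly iN ps subrr. Qed.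

Lemma coef_disc i : ((1 - 'X *+ 3) * (1 + 'X) : {poly rat})`_i = poly_disc i.
Proof.
have -> : (1 - 'X *+ 3) * (1 + 'X) = 1 - 'X *+ 2 - 'X^2 *+ 3 :> {poly rat} by ring.
rewrite !coefB !coefMn coef1 coefX coefXn /poly_disc.
by case: i => [|[|[|i]]] /=; rewrite ?mul0rn ?subr0 ?sub0r //=; lra.
Qed.

Lemma coef_num i : (1 - 'X *+ 3 : {poly rat})`_i = poly_num i.
Proof.
rewrite coefB coefMn coef1 coefX /poly_num.
by case: i => [|[|i]] /=; rewrite ?mul0rn ?subr0 ?sub0r //=; lra.
Qed.

Lemma coef_den i : ('X *+ 6 - 2 : {poly rat})`_i = poly_den i.
Proof.
rewrite coefB coefMn coefX coefMn coef1 /poly_den.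
by case: i => [|[|i]] /=; rewrite ?mul0rn ?subr0 ?sub0r //=; lra.
Qed.

Lemma gf_trunc_quadratic d y N : is_sqrt_disc d -> is_gf d y ->
  'X^N %| (1 - 'X *+ 3) * (1 + trunc N y *+ 2) ^+ 2 - (1 + 'X).
Proof.
move=> [_ dd] gf; set D := 1 + trunc N y *+ 2; set dN := trunc N d.
have sq : 'X^N %| dN ^+ 2 - (1 - 'X *+ 3) * (1 + 'X).
  apply: dvdp_sub_trans (dvdp_Xn_trunc_mul N d d) _.
  by apply/dvdp_XnP => i iN; rewrite coefB coef_poly iN dd coef_disc subrr.
have lin : 'X^N %| (1 - 'X *+ 3) * D - dN.
  have gfN : 'X^N %| ('X *+ 6 - 2) * trunc N y - (1 - 'X *+ 3 - dN).
    apply: dvdp_sub_trans (dvdp_sub_trans _ (dvdp_Xn_trunc_mul N poly_den y)) _.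
      by rewrite -mulrBl dvdp_mulr // (dvdp_Xn_trunc N coef_den).
    apply/dvdp_XnP => i iN.
    by rewrite coefB coef_poly iN gf coefB coef_num coef_poly iN subrr.
  by rewrite -dvdpNr; move: gfN; congr (_ %| _); rewrite /D; ring.
have : 'X^N %| (1 - 'X *+ 3) * ((1 - 'X *+ 3) * D ^+ 2 - (1 + 'X)).
  have -> : (1 - 'X *+ 3) * ((1 - 'X *+ 3) * D ^+ 2 - (1 + 'X)) =
    ((1 - 'X *+ 3) * D - dN) * ((1 - 'X *+ 3) * D + dN) + (dN ^+ 2 - (1 - 'X *+ 3) * (1 + 'X)).
    by ring.
  by rewrite dvdp_add ?dvdp_mulr.
by rewrite dvdp_XnMl // coefB coefMn coef1 coefX /=.
Qed.

Lemma quadratic_ode N (D : {poly rat}) : D`_0 != 0 ->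
  'X^(N.+1) %| (1 - 'X *+ 3) * D ^+ 2 - (1 + 'X) ->
  'X^N %| (1 + 'X) * (1 - 'X *+ 3) * D^`() - D *+ 2.
Proof.
move=> D0 E0; have E1 := dvdp_Xn_deriv E0.
have : 'X^N %| D *+ 2 * ((1 + 'X) * (1 - 'X *+ 3) * D^`() - D *+ 2).
  have -> : D *+ 2 * ((1 + 'X) * (1 - 'X *+ 3) * D^`() - D *+ 2) =
    (1 + 'X) * ((1 - 'X *+ 3) * D ^+ 2 - (1 + 'X))^`() - ((1 - 'X *+ 3) * D ^+ 2 - (1 + 'X)).
    by rewrite !derivE; ring.
  by rewrite dvdp_sub ?dvdp_mull // (dvdp_trans (dvdp_exp2l _ (leqnSn N))).
by rewrite dvdp_XnMl // coefMn mulrn_eq0.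
Qed.

Lemma coef_ode (p : {poly rat}) m :
  ((1 + 'X) * (1 - 'X *+ 3) * p^`() - p *+ 2)`_m.+1 =
  m.+2%:R * p`_m.+2 - 2 * m.+2%:R * p`_m.+1 - 3 * m%:R * p`_m.
Proof.
have -> : (1 + 'X) * (1 - 'X *+ 3) * p^`() - p *+ 2 =
    p^`() - ('X * p^`()) *+ 2 - ('X^2 * p^`()) *+ 3 - p *+ 2 by ring.
rewrite !coefB !coefMn coefXM coefXnM !coef_deriv.
by case: m => [|m] /=; [ring | rewrite subn2 /=; ring].
Qed.

Lemma gf_coef0 d y : is_sqrt_disc d -> is_gf d y -> y 0%N = 0.
Proof.
move=> [d0 _] /(_ 0%N); rewrite /conv big_ord1 d0 /poly_den /poly_num /=; lra.
Qed.

Lemma gf_coef1 d y : is_sqrt_disc d -> is_gf d y -> y 1%N = 1.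
Proof.
move=> [d0 dd] gf; have := gf 1%N; have := dd 1%N; have := gf 0%N.
rewrite /conv !big_ord_recr !big_ord0 /= d0 /poly_den /poly_num /poly_disc /=; lra.
Qed.

Lemma gf_rec d y m : is_sqrt_disc d -> is_gf d y ->
  m.+2%:R * y m.+2 = 2 * m.+2%:R * y m.+1 + 3 * m%:R * y m.
Proof.
move=> sd gf; set D := 1 + trunc m.+3 y *+ 2.
have coefD i : (i < m.+3)%N -> D`_i = (i == 0%N)%:R + 2 * y i.
  by move=> im; rewrite coefD coef1 coefMn coef_poly im mulr_natl.
have D0 : D`_0 != 0 by rewrite coefD // (gf_coef0 sd gf) mulr0 addr0 oner_neq0.
have /dvdp_XnP/(_ m.+1 (ltnSn _)) := quadratic_ode D0 (gf_trunc_quadratic m.+3 sd gf).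
rewrite coef_ode !coefD //; last exact: leqW (leqnSn _).
by case: m {D D0 coefD} => [|m] /=; rewrite ?mul0r; lra.
Qed.

Lemma count_multisets_a005773 n : (count_multisets n.+1)%:R = a005773 n.+1.
Proof.
rewrite (count_multisets_coef rat) prod_allowed_multiplicities.
exact: coef_prod_allowed_multiplicities.
Qed.

Theorem theorem4 (d y : series) :
  is_sqrt_disc d -> is_gf d y ->
  forall n : nat, (1 <= n)%N -> (count_multisets n)%:R = y n.
Proof.
move=> sd gf [|n] // _; rewrite count_multisets_a005773.
have y1 := gf_coef1 sd gf.
have y2 : y 2%N = 2 by have := gf_rec 0 sd gf; rewrite y1; lra.
apply: a005773_recurrence_uniq n; first exact: a005773_rec.
- by move=> m; apply: gf_rec m.+1 sd gf.
- by rewrite y1 /a005773 /= coef_1DX_M expr0 !coef1.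
- rewrite y2 /a005773 /= coef_1DX_M expr1 /trinomial !coefD !coef1 !coefX !coefXn /=; lra.
Qed.
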